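(* Let $E,F\subseteq\mathbb{R}$ be Lebesgue-measurable and let $m:E\to F$ be a bijection which is strictly increasing and measure-preserving (with respect to Lebesgue measure). Then $m^{-1}$ is also strictly increasing and measure-preserving; that is, $m\in\mathbb{MO}(E,F)$.
   Context: A map $m:E\to F$ is measure-preserving if for every Lebesgue-measurable $A\subseteq F$, $m^{-1}(A)$ is Lebesgue-measurable and $\lambda(m^{-1}(A))=\lambda(A)$. $\mathbb{MO}(E,F)$ is the set of strictly increasing bijections $m:E\to F$ such that both $m$ and $m^{-1}$ are measure-preserving. *)

From Stdlib Require Import Reals ClassicalEpsilon.
Open Scope R_scope.

(* Extended nonnegative reals [0,+oo] (finite part only used for values >= 0). *)
Inductive ereal : Type := Fin (r : R) | PInf.

Definition ele (x y : ereal) : Prop :=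
  match x, y with
  | Fin a, Fin b => a <= b
  | _, PInf => True
  | PInf, Fin _ => False
  end.

Definition eadd (x y : ereal) : ereal :=
  match x, y with
  | Fin a, Fin b => Fin (a + b)
  | _, _ => PInf
  end.

Definition series_sum (u : nat -> R) (v : ereal) : Prop :=
  match v with
  | Fin l => Un_cv (fun N => sum_f_R0 u N) l
  | PInf => ~ exists l, Un_cv (fun N => sum_f_R0 u N) l
  end.

Definition cover_length (A : R -> Prop) (v : ereal) : Prop :=
  exists a b : nat -> R,
    (forall n, a n <= b n) /\
    (forall x, A x -> exists n, a n <= x <= b n) /\
    series_sum (fun n => b n - a n) v.

Definition is_outer_measure (A : R -> Prop) (v : ereal) : Prop :=
  (forall w, cover_length A w -> ele v w) /\
  (forall u, (forall w, cover_length A w -> ele u w) -> ele u v).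

(* Lebesgue outer measure (the infimum exists, so this picks it). *)
Definition lambda (A : R -> Prop) : ereal :=
  epsilon (inhabits PInf) (is_outer_measure A).

Definition measurable (A : R -> Prop) : Prop :=
  forall T : R -> Prop,
    lambda T = eadd (lambda (fun x => T x /\ A x)) (lambda (fun x => T x /\ ~ A x)).

(* m : E -> F (represented by a function R -> R) is measure-preserving:
   for every Lebesgue-measurable A contained in F, the preimage
   m^{-1}(A) = {x in E | m x in A} is measurable and has the same measure. *)
Definition measure_preserving (E F : R -> Prop) (m : R -> R) : Prop :=
  forall A : R -> Prop,
    measurable A -> (forall y, A y -> F y) ->
    measurable (fun x => E x /\ A (m x)) /\
    lambda (fun x => E x /\ A (m x)) = lambda A.

Definition strictly_increasing_on (E : R -> Prop) (m : R -> R) : Prop :=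
  forall x y, E x -> E y -> x < y -> m x < m y.

Definition bijection_on (E F : R -> Prop) (m : R -> R) : Prop :=
  (forall x, E x -> F (m x)) /\
  (forall x y, E x -> E y -> m x = m y -> x = y) /\
  (forall y, F y -> exists x, E x /\ m x = y).

Definition inverse_on (E F : R -> Prop) (m minv : R -> R) : Prop :=
  forall y, F y -> E (minv y) /\ m (minv y) = y.

Definition MO (E F : R -> Prop) (m : R -> R) : Prop :=
  bijection_on E F m /\ strictly_increasing_on E m /\
  measure_preserving E F m /\
  exists minv, inverse_on E F m minv /\ measure_preserving F E minv.

(* The inverse is trivially
   increasing; the content is that it is measure-preserving, i.e. that for
   every measurable B contained in E the image m(B) = F /\ minv^{-1}(B) is
   measurable with lambda(m(B)) = lambda(B).

   The key fact is that m preserves the outer measure of EVERY subset S of E.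
   Cover S by intervals [a_n, b_n]; then m(S) is covered by the sets
   F /\ [inf m(E /\ [a_n,b_n]), sup m(E /\ [a_n,b_n])], which are measurable
   (intersections of F with up- and down-closed sets) and, being mapped back
   into [a_n, b_n] by monotonicity, have measure <= b_n - a_n.  Conversely
   a cover of m(S) by intervals [a_n,b_n] pulls back to a cover of S by the
   preimages of F /\ [a_n,b_n], of measure <= b_n - a_n.  Both inequalities
   follow from countable subadditivity of the outer measure.  Measurability
   of m(B) is then checked with the Caratheodory criterion relative to F. *)

From Stdlib Require Import Reals Lra Lia ClassicalEpsilon Classical
  FunctionalExtensionality PropExtensionality.
Open Scope R_scope.

Lemma set_ext (A B : R -> Prop) : (forall x, A x <-> B x) -> A = B.
Proof.
  intros H; apply functional_extensionality; intro x.
  apply propositional_extensionality; apply H.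
Qed.

Definition img (m : R -> R) (S : R -> Prop) : R -> Prop :=
  fun y => exists x, S x /\ m x = y.

Lemma ele_antisym x y : ele x y -> ele y x -> x = y.
Proof. destruct x, y; simpl; intros; try tauto. f_equal; lra. Qed.

Lemma eadd_mono x y x' y' : ele x x' -> ele y y' -> ele (eadd x y) (eadd x' y').
Proof. destruct x, y, x', y'; simpl; intros; try tauto; lra. Qed.

Lemma eadd_assoc x y z : eadd x (eadd y z) = eadd (eadd x y) z.
Proof. destruct x, y, z; simpl; auto. f_equal; ring. Qed.

Lemma eadd_comm x y : eadd x y = eadd y x.
Proof. destruct x, y; simpl; auto. f_equal; ring. Qed.

Lemma lim_le u l B : Un_cv u l -> (forall n, u n <= B) -> l <= B.
Proof.
  intros Hc Hb. destruct (Rle_lt_dec l B) as [h|h]; auto.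
  destruct (Hc (l - B)) as [N HN]; [lra|].
  specialize (HN N (le_n N)). specialize (Hb N). unfold Rdist in HN.
  apply Rabs_def2 in HN. lra.
Qed.

Lemma psum_growing u : (forall n, 0 <= u n) -> Un_growing (fun N => sum_f_R0 u N).
Proof. intros H n. rewrite tech5. specialize (H (S n)). lra. Qed.

Lemma series_conv u B : (forall n, 0 <= u n) -> (forall N, sum_f_R0 u N <= B) ->
  exists l, Un_cv (fun N => sum_f_R0 u N) l /\ l <= B.
Proof.
  intros H0 HB. destruct (growing_cv (fun N => sum_f_R0 u N)) as [l Hl].
  - apply psum_growing; auto.
  - exists B. intros x [i ->]. auto.
  - exists l; split; auto. eapply lim_le; eauto.
Qed.

Lemma psum_le_lim u l N : (forall n, 0 <= u n) ->
  Un_cv (fun N => sum_f_R0 u N) l -> sum_f_R0 u N <= l.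
Proof.
  intros H Hc. apply (growing_ineq (fun N => sum_f_R0 u N)); auto.
  apply psum_growing; auto.
Qed.

Lemma series_eventually_zero u N0 l : (forall n, (N0 < n)%nat -> u n = 0) ->
  sum_f_R0 u N0 = l -> Un_cv (fun N => sum_f_R0 u N) l.
Proof.
  intros Hz <- eps He. exists N0. intros n Hn. unfold Rdist.
  replace (sum_f_R0 u n) with (sum_f_R0 u N0).
  - rewrite Rminus_diag, Rabs_R0; auto.
  - induction Hn as [|n Hn IH]; auto. rewrite tech5, Hz, <- IH by lia. ring.
Qed.

Lemma series_plus u v lu lv :
  Un_cv (fun N => sum_f_R0 u N) lu -> Un_cv (fun N => sum_f_R0 v N) lv ->
  Un_cv (fun N => sum_f_R0 (fun n => u n + v n) N) (lu + lv).
Proof.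
  intros Hu Hv. eapply Un_cv_ext; [|apply (CV_plus _ _ _ _ Hu Hv)].
  intro N. simpl. rewrite <- plus_sum. reflexivity.
Qed.

Fixpoint sm (f : nat -> R) (N : nat) : R :=
  match N with O => 0 | S N' => sm f N' + f N' end.

Lemma sm_sum f N : sm f (S N) = sum_f_R0 f N.
Proof. induction N; simpl in *; auto. ring. rewrite <- IHN. simpl. ring. Qed.

Lemma sm_ext f h N : (forall n, (n < N)%nat -> f n = h n) -> sm f N = sm h N.
Proof.
  induction N; simpl; intros; auto.
  rewrite IHN by (intros; apply H; lia). rewrite H by lia. auto.
Qed.

Lemma sm_plus f h N : sm (fun n => f n + h n) N = sm f N + sm h N.
Proof. induction N; simpl; [ring|]. rewrite IHN; ring. Qed.

Lemma sm_le f h N : (forall n, (n < N)%nat -> f n <= h n) -> sm f N <= sm h N.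
Proof.
  induction N; simpl; intros; [lra|].
  assert (f N <= h N) by (apply H; lia).
  assert (sm f N <= sm h N) by (apply IHN; intros; apply H; lia). lra.
Qed.

Lemma sm_mono f N M : (forall n, 0 <= f n) -> (N <= M)%nat -> sm f N <= sm f M.
Proof. intros H HNM. induction HNM; [lra|]. simpl. specialize (H m). lra. Qed.

(* The weights eps / 2^(n+1) used to spread an error eps over countably
   many covers sum to less than eps. *)
Lemma geom_sum eps J : sm (fun n => eps / 2 ^ (S n)) (S J) = eps - eps / 2 ^ (S J).
Proof.
  induction J.
  - simpl. field.
  - change (sm (fun n => eps / 2 ^ S n) (S (S J)))
      with (sm (fun n => eps / 2 ^ S n) (S J) + eps / 2 ^ (S (S J))).
    rewrite IHJ. simpl. field. apply pow_nonzero. lra.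
Qed.

(* enum lists (0,0), (0,1), (1,0), (0,2), (1,1), (2,0), ...: the d-th
   anti-diagonal {n + k = d} is traversed from (0,d) to (d,0). *)
Fixpoint enum (i : nat) : nat * nat :=
  match i with
  | O => (O, O)
  | S i' => let (n, k) := enum i' in
            match k with O => (O, S n) | S k' => (S n, k') end
  end.

Definition along_diagonals {A : Type} (g : nat -> nat -> A) (i : nat) : A :=
  let (n, k) := enum i in g n k.

Lemma enum_surj : forall d n, (n <= d)%nat -> exists i, enum i = (n, (d - n)%nat).
Proof.
  induction d.
  - intros n Hn. exists O. replace n with O by lia. auto.
  - induction n; intros Hn.
    + destruct (IHd d (le_n d)) as [i Hi]. exists (S i). simpl. rewrite Hi.
      replace (d - d)%nat with O by lia. f_equal.
    + destruct (IHn ltac:(lia)) as [i Hi]. exists (S i). simpl. rewrite Hi.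
      destruct (S d - n)%nat eqn:E; [lia|]. f_equal. lia.
Qed.

Section Diagonals.
Variable g : nat -> nat -> R.

Definition diag_sum (d : nat) : R := sm (fun n => g n (d - n)%nat) (S d).

Lemma enum_partial_sum : forall i, let (n, k) := enum i in
  sm (along_diagonals g) (S i) =
  sm diag_sum (n + k)%nat + sm (fun n' => g n' (n + k - n')%nat) (S n).
Proof.
  induction i.
  - unfold along_diagonals. simpl. ring.
  - change (sm (along_diagonals g) (S (S i)))
      with (sm (along_diagonals g) (S i) + along_diagonals g (S i)).
    unfold along_diagonals at 2.
    destruct (enum i) as [n k] eqn:E.
    assert (E2 : enum (S i) = match k with O => (O, S n) | S k' => (S n, k') end)
      by (simpl; rewrite E; auto).
    rewrite E2, IHi. destruct k as [|k'].
    + rewrite Nat.add_0_r, Nat.add_0_l.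
      change (sm diag_sum (S n)) with (sm diag_sum n + diag_sum n).
      unfold diag_sum. simpl (sm _ 1).
      replace (sm (fun n' => g n' (n + 0 - n')%nat) (S n))
        with (sm (fun n' => g n' (n - n')%nat) (S n)).
      * ring.
      * apply sm_ext; intros; f_equal; lia.
    + replace (S n + k')%nat with (n + S k')%nat by lia.
      simpl sm. replace (n + S k' - S n)%nat with k' by lia. ring.
Qed.

Lemma diagonals_by_rows : forall J,
  sm diag_sum (S J) = sm (fun n => sm (g n) (S (J - n))) (S J).
Proof.
  induction J.
  - unfold diag_sum. simpl. ring.
  - change (sm diag_sum (S (S J))) with (sm diag_sum (S J) + diag_sum (S J)).
    rewrite IHJ.
    change (sm (fun n => sm (g n) (S (S J - n))) (S (S J))) with
      (sm (fun n => sm (g n) (S (S J - n))) (S J) + sm (g (S J)) (S (S J - S J))).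
    rewrite (sm_ext (fun n => sm (g n) (S (S J - n)))
                    (fun n => sm (g n) (S (J - n)) + g n (S J - n)%nat)).
    2:{ intros n Hn. replace (S J - n)%nat with (S (J - n)) by lia. reflexivity. }
    rewrite sm_plus. unfold diag_sum at 1.
    change (sm (fun n => g n (S J - n)%nat) (S (S J))) with
      (sm (fun n => g n (S J - n)%nat) (S J) + g (S J) (S J - S J)%nat).
    rewrite Nat.sub_diag. change (sm (g (S J)) 1) with (0 + g (S J) O). ring.
Qed.

Lemma along_diagonals_bound (C : nat -> R) (w : R) :
  (forall n k, 0 <= g n k) -> (forall n N, sum_f_R0 (g n) N <= C n) ->
  (forall N, sum_f_R0 C N <= w) ->
  forall N, sum_f_R0 (along_diagonals g) N <= w.
Proof.
  intros Hg Hrow Hcol N. rewrite <- sm_sum.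
  assert (HE := enum_partial_sum N). destruct (enum N) as [n k].
  rewrite HE.
  apply Rle_trans with (sm diag_sum (S (n + k))).
  { change (sm diag_sum (S (n + k))) with (sm diag_sum (n + k) + diag_sum (n + k)).
    apply Rplus_le_compat_l. apply sm_mono; [intros; auto | lia]. }
  rewrite diagonals_by_rows.
  apply Rle_trans with (sm C (S (n + k))).
  - apply sm_le. intros n0 _. rewrite sm_sum. apply Hrow.
  - rewrite sm_sum. apply Hcol.
Qed.

End Diagonals.

Lemma cover_nonneg A w : cover_length A (Fin w) -> 0 <= w.
Proof.
  intros (a & b & Hab & _ & Hs). simpl in Hs.
  assert (H := psum_le_lim (fun n => b n - a n) w 0
                 ltac:(intro n; specialize (Hab n); lra) Hs).
  simpl in H. specialize (Hab 0%nat). lra.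
Qed.

Lemma outer_exists A : exists v, is_outer_measure A v.
Proof.
  destruct (classic (exists w, cover_length A (Fin w))) as [[w0 Hw0]|Hno].
  - set (Ep := fun z => exists w, cover_length A (Fin w) /\ z = - w).
    destruct (completeness Ep) as [M [HM1 HM2]].
    + exists 0. intros z [w [Hw ->]]. apply cover_nonneg in Hw. lra.
    + exists (- w0); exists w0; auto.
    + exists (Fin (- M)). split.
      * intros [w|] Hw; simpl; auto.
        assert (- w <= M) by (apply HM1; exists w; auto). lra.
      * intros [r|] Hu; simpl.
        -- assert (M <= - r); [|lra].
           apply HM2. intros z [w [Hw ->]]. specialize (Hu _ Hw). simpl in Hu. lra.
        -- exact (Hu _ Hw0).
  - exists PInf. split.
    + intros [w|] Hw; simpl; auto. apply Hno; eauto.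
    + intros [r|] _; simpl; auto.
Qed.

Lemma lambda_le_cover A w : cover_length A w -> ele (lambda A) w.
Proof.
  intro H. apply (proj1 (epsilon_spec _ _ (outer_exists A))); auto.
Qed.

Lemma lambda_glb A u : (forall w, cover_length A w -> ele u w) -> ele u (lambda A).
Proof.
  intro H. apply (proj2 (epsilon_spec _ _ (outer_exists A))); auto.
Qed.

Lemma lambda_nonneg A : ele (Fin 0) (lambda A).
Proof. apply lambda_glb. intros [w|] Hw; simpl; auto. apply cover_nonneg in Hw; auto. Qed.

Lemma lambda_approx A r eps : ele (lambda A) (Fin r) -> 0 < eps ->
  exists w, cover_length A (Fin w) /\ w < r + eps.
Proof.
  intros Hr He. apply NNPP. intro Hn.
  assert (H : ele (Fin (r + eps)) (lambda A)).
  { apply lambda_glb. intros [w|] Hw; simpl; auto.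
    destruct (Rlt_le_dec w (r + eps)) as [h|h]; auto. exfalso; apply Hn; eauto. }
  destruct (lambda A); simpl in *; lra.
Qed.

Lemma lambda_le_eps X w :
  (forall eps, 0 < eps -> ele (lambda X) (Fin (w + eps))) -> ele (lambda X) (Fin w).
Proof.
  intro Heps. destruct (lambda X) as [r|].
  - simpl. destruct (Rle_lt_dec r w) as [h|h]; auto.
    specialize (Heps ((r - w) / 2) ltac:(lra)). simpl in Heps. lra.
  - specialize (Heps 1 Rlt_0_1). simpl in Heps. auto.
Qed.

Lemma lambda_interval A p q : p <= q -> (forall x, A x -> p <= x <= q) ->
  ele (lambda A) (Fin (q - p)).
Proof.
  intros Hpq HA. apply lambda_le_cover.
  exists (fun n => match n with O => p | _ => 0 end),
         (fun n => match n with O => q | _ => 0 end).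
  split; [intros [|n]; lra|]. split.
  - intros x Hx. exists O. auto.
  - apply (series_eventually_zero _ O); [intros [|n] Hn; [lia | ring] | simpl; ring].
Qed.

Lemma near_optimal_covers (A : nat -> R -> Prop) (c : nat -> R) eps :
  (forall n, ele (lambda (A n)) (Fin (c n))) -> 0 < eps ->
  exists (a b : nat -> nat -> R) (W : nat -> R), forall n,
    (forall k, a n k <= b n k) /\ (forall x, A n x -> exists k, a n k <= x <= b n k) /\
    Un_cv (fun N => sum_f_R0 (fun k => b n k - a n k) N) (W n) /\
    W n <= c n + eps / 2 ^ (S n).
Proof.
  intros Hc He.
  assert (Hch : forall n, exists abW : (nat -> R) * (nat -> R) * R,
     let '(a, b, W) := abW in
     (forall k, a k <= b k) /\ (forall x, A n x -> exists k, a k <= x <= b k) /\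
     Un_cv (fun N => sum_f_R0 (fun k => b k - a k) N) W /\ W <= c n + eps / 2 ^ (S n)).
  { intro n.
    destruct (lambda_approx (A n) (c n) (eps / 2 ^ S n) (Hc n))
      as [W [(a & b & H1 & H2 & H3) HW]].
    { apply Rdiv_lt_0_compat; auto. apply pow_lt; lra. }
    exists (a, b, W). repeat split; auto. lra. }
  apply choice in Hch. destruct Hch as [f Hf].
  exists (fun n => fst (fst (f n))), (fun n => snd (fst (f n))), (fun n => snd (f n)).
  intro n. specialize (Hf n). destruct (f n) as [[a b] W]. exact Hf.
Qed.

Lemma count_subadd (X : R -> Prop) (A : nat -> R -> Prop) (c : nat -> R) (w : R) :
  (forall x, X x -> exists n, A n x) ->
  (forall n, ele (lambda (A n)) (Fin (c n))) ->
  Un_cv (fun N => sum_f_R0 c N) w ->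
  ele (lambda X) (Fin w).
Proof.
  intros Hcov Hc Hw. apply lambda_le_eps. intros eps He.
  assert (Hc0 : forall n, 0 <= c n).
  { intro n. specialize (Hc n). assert (H := lambda_nonneg (A n)).
    destruct (lambda (A n)); simpl in *; lra. }
  destruct (near_optimal_covers A c eps Hc He) as (a & b & W & Hf).
  set (g := fun n k => b n k - a n k).
  assert (Hg0 : forall n k, 0 <= g n k).
  { intros n k. destruct (Hf n) as [H _]. specialize (H k). unfold g. lra. }
  assert (Hrows : forall N, sum_f_R0 (fun n => c n + eps / 2 ^ S n) N <= w + eps).
  { intro N. rewrite <- sm_sum, sm_plus, geom_sum, sm_sum.
    assert (sum_f_R0 c N <= w) by (apply psum_le_lim; auto).
    assert (0 < eps / 2 ^ S N) by (apply Rdiv_lt_0_compat; auto; apply pow_lt; lra).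
    lra. }
  assert (Hbound : forall N, sum_f_R0 (along_diagonals g) N <= w + eps).
  { apply (along_diagonals_bound g (fun n => c n + eps / 2 ^ S n)); auto.
    intros n N. destruct (Hf n) as (_ & _ & HW & HWc).
    eapply Rle_trans; [apply psum_le_lim; eauto | exact HWc]. }
  destruct (series_conv (along_diagonals g) (w + eps)) as [L [HL HLb]]; auto.
  { intro i. unfold along_diagonals. destruct (enum i); auto. }
  assert (Hcl : cover_length X (Fin L)).
  { exists (along_diagonals a), (along_diagonals b). split; [|split].
    - intro i. unfold along_diagonals. destruct (enum i). apply Hf.
    - intros x Hx. destruct (Hcov x Hx) as [n Hn].
      destruct (proj1 (proj2 (Hf n)) x Hn) as [k Hk].
      destruct (enum_surj (n + k) n ltac:(lia)) as [i Hi]. exists i.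
      unfold along_diagonals. rewrite Hi. replace (n + k - n)%nat with k by lia. auto.
    - eapply Un_cv_ext; [|exact HL]. intro N. apply sum_eq. intros i _.
      unfold along_diagonals, g. destruct (enum i); auto. }
  apply lambda_le_cover in Hcl. destruct (lambda X); simpl in *; lra.
Qed.

Lemma fin_subadd (T A B : R -> Prop) : (forall x, T x -> A x \/ B x) ->
  ele (lambda T) (eadd (lambda A) (lambda B)).
Proof.
  intro Hc.
  destruct (lambda A) as [r1|] eqn:E1; [|simpl; destruct (lambda T); simpl; auto].
  destruct (lambda B) as [r2|] eqn:E2; [|simpl; destruct (lambda T); simpl; auto].
  set (As := fun n => match n with O => A | 1%nat => B | _ => fun _ => False end).
  set (c := fun n => match n with O => r1 | 1%nat => r2 | _ => 0 end).
  apply (count_subadd T As c).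
  - intros x Hx. destruct (Hc x Hx); [exists O | exists 1%nat]; auto.
  - intros [|[|n]]; simpl.
    + rewrite E1; simpl; lra.
    + rewrite E2; simpl; lra.
    + replace 0 with (0 - 0) by ring. apply lambda_interval; [lra | tauto].
  - apply (series_eventually_zero c 1); [intros [|[|n]] Hn; [lia | lia | reflexivity] | reflexivity].
Qed.

Lemma lambda_le_transfer (X S : R -> Prop) (A : R -> R -> R -> Prop) :
  (forall p q, p <= q -> ele (lambda (A p q)) (Fin (q - p))) ->
  (forall a b : nat -> R, (forall x, S x -> exists n, a n <= x <= b n) ->
     forall x, X x -> exists n, A (a n) (b n) x) ->
  ele (lambda X) (lambda S).
Proof.
  intros HA Hcov. apply lambda_glb. intros [l|] Hw; [|destruct (lambda X); simpl; auto].
  destruct Hw as (a & b & Hab & HS & Hs).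
  apply (count_subadd X (fun n => A (a n) (b n)) (fun n => b n - a n)); auto.
Qed.

Lemma clipped_series (a b c : nat -> R) l : (forall n, a n <= b n) ->
  Un_cv (fun N => sum_f_R0 (fun n => b n - a n) N) l ->
  exists L1 L2,
    Un_cv (fun N => sum_f_R0 (fun n => Rmin (b n) (c n) - Rmin (a n) (c n)) N) L1 /\
    Un_cv (fun N => sum_f_R0 (fun n => Rmax (b n) (c n) - Rmax (a n) (c n)) N) L2 /\
    L1 + L2 = l.
Proof.
  intros Hab Hs.
  set (u1 := fun n => Rmin (b n) (c n) - Rmin (a n) (c n)).
  set (u2 := fun n => Rmax (b n) (c n) - Rmax (a n) (c n)).
  assert (Hu : forall n, 0 <= u1 n /\ 0 <= u2 n /\ u1 n + u2 n = b n - a n).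
  { intro n. specialize (Hab n). unfold u1, u2, Rmin, Rmax.
    repeat destruct Rle_dec; lra. }
  assert (Hl : forall N, sum_f_R0 (fun n => b n - a n) N <= l).
  { intro; apply psum_le_lim; auto. intro n; specialize (Hab n); lra. }
  assert (Hpart : forall u, (forall n, 0 <= u n <= b n - a n) ->
            exists L, Un_cv (fun N => sum_f_R0 u N) L).
  { intros u Hu'. destruct (series_conv u l) as [L [HL _]]; eauto.
    - intro n; apply Hu'.
    - intro N. eapply Rle_trans; [|apply (Hl N)].
      apply sum_Rle; intros n _; apply Hu'. }
  destruct (Hpart u1) as [L1 HL1]; [intro n; destruct (Hu n) as (?&?&?); lra|].
  destruct (Hpart u2) as [L2 HL2]; [intro n; destruct (Hu n) as (?&?&?); lra|].
  exists L1, L2. repeat split; auto.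
  apply (UL_sequence (fun N => sum_f_R0 (fun n => b n - a n) N)); auto.
  eapply Un_cv_ext; [|apply (series_plus _ _ _ _ HL1 HL2)].
  intro N. apply sum_eq. intros n _. apply Hu.
Qed.

Lemma cut_meas (H : R -> Prop) :
  (forall p q, p <= q -> exists c, (forall x, p <= x <= q -> c < x -> H x) /\
                                  (forall x, p <= x <= q -> x < c -> ~ H x)) ->
  measurable H.
Proof.
  intros Hcut T. apply ele_antisym.
  - apply fin_subadd. intros x Hx. destruct (classic (H x)); auto.
  - apply lambda_glb. intros [l|] Hw; [|destruct (eadd _ _); simpl; auto].
    destruct Hw as (a & b & Hab & Hcov & Hs).
    assert (Hch : forall n, exists c,
               (forall x, a n <= x <= b n -> c < x -> H x) /\
               (forall x, a n <= x <= b n -> x < c -> ~ H x))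
      by (intro; apply Hcut; auto).
    apply choice in Hch. destruct Hch as [c Hc].
    destruct (clipped_series a b c l Hab Hs) as (L1 & L2 & HL1 & HL2 & <-).
    rewrite (eadd_comm (lambda _)).
    change (Fin (L1 + L2)) with (eadd (Fin L1) (Fin L2)).
    apply eadd_mono; apply lambda_le_cover.
    + exists (fun n => Rmin (a n) (c n)), (fun n => Rmin (b n) (c n)). split; [|split].
      * intro n; specialize (Hab n). unfold Rmin; repeat destruct Rle_dec; lra.
      * intros x [Tx Hx]. destruct (Hcov x Tx) as [n Hn]. exists n.
        assert (x <= c n).
        { destruct (Rle_lt_dec x (c n)); auto. exfalso; apply Hx, (proj1 (Hc n)); auto. }
        split; [eapply Rle_trans; [apply Rmin_l|]; lra | apply Rmin_glb; lra].
      * exact HL1.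
    + exists (fun n => Rmax (a n) (c n)), (fun n => Rmax (b n) (c n)). split; [|split].
      * intro n; specialize (Hab n). unfold Rmax; repeat destruct Rle_dec; lra.
      * intros x [Tx Hx]. destruct (Hcov x Tx) as [n Hn]. exists n.
        assert (c n <= x).
        { destruct (Rle_lt_dec (c n) x); auto. exfalso; apply ((proj2 (Hc n)) x); auto. }
        split; [apply Rmax_lub; lra | eapply Rle_trans; [|apply Rmax_l]; lra].
      * exact HL2.
Qed.

(* Up-closed sets (rays) are measurable: the cut point is an infimum. *)
Lemma upclosed_meas (H : R -> Prop) : (forall x y, x <= y -> H x -> H y) -> measurable H.
Proof.
  intro Hup. apply cut_meas. intros p q Hpq.
  destruct (classic (H p)) as [Hp|Hp].
  { exists p. split; [intros x Hx _; apply (Hup p x); [lra|auto] | intros x Hx Hlt; lra]. }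
  destruct (classic (H q)) as [Hq|Hq].
  2:{ exists q. split; [intros x Hx Hlt; lra | intros x Hx _ Hhx; apply Hq, (Hup x); auto; lra]. }
  destruct (completeness (fun x => ~ H x /\ x <= q)) as [M [HM1 HM2]].
  { exists q. intros z [_ Hz]; auto. }
  { exists p; split; auto. }
  exists M. split.
  - intros x Hx HMx. apply NNPP. intro Hn.
    assert (x <= M) by (apply HM1; split; auto; lra). lra.
  - intros x Hx HxM Hhx. assert (M <= x); [|lra].
    apply HM2. intros z [Hz Hzq]. destruct (Rle_lt_dec x z) as [h|h]; [|lra].
    exfalso. apply Hz, (Hup x); auto.
Qed.

Lemma compl_meas A : measurable A -> measurable (fun x => ~ A x).
Proof.
  intros HA T. rewrite (HA T), eadd_comm. f_equal. f_equal.
  apply set_ext. intro x. split.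
  - intros [? ?]; split; auto.
  - intros [? ?]; split; auto. apply NNPP; auto.
Qed.

Lemma inter_meas A B : measurable A -> measurable B -> measurable (fun x => A x /\ B x).
Proof.
  intros HA HB T. rewrite (HA T), (HB (fun x => T x /\ A x)).
  rewrite (HA (fun x => T x /\ ~ (A x /\ B x))), <- eadd_assoc. f_equal.
  - f_equal. apply set_ext; intro x; tauto.
  - f_equal; f_equal; apply set_ext; intro x; tauto.
Qed.

(* Down-closed sets are complements of up-closed ones. *)
Lemma downclosed_meas (H : R -> Prop) : (forall x y, x <= y -> H y -> H x) -> measurable H.
Proof.
  intro Hd. replace H with (fun x => ~ ~ H x)
    by (apply set_ext; intro; split; [apply NNPP | tauto]).
  apply compl_meas, upclosed_meas. intros x y Hxy Hx Hy. apply Hx, (Hd x y); auto.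
Qed.

Lemma interval_meas p q : measurable (fun y => p <= y /\ y <= q).
Proof. apply inter_meas; [apply upclosed_meas | apply downclosed_meas]; intros; lra. Qed.

Lemma measurable_within (F H : R -> Prop) :
  measurable F -> (forall y, H y -> F y) ->
  (forall T, lambda (fun y => T y /\ F y) =
             eadd (lambda (fun y => (T y /\ F y) /\ H y))
                  (lambda (fun y => (T y /\ F y) /\ ~ H y))) ->
  measurable H.
Proof.
  intros HF HHF Hrel T.
  rewrite (HF T), Hrel, (HF (fun y => T y /\ ~ H y)), <- eadd_assoc.
  repeat f_equal; apply set_ext; intro y; split; firstorder.
Qed.

Section MonotoneBijection.
Variables (E F : R -> Prop) (m : R -> R).
Hypothesis F_meas : measurable F.
Hypothesis m_maps : forall x, E x -> F (m x).
Hypothesis m_inj : forall x y, E x -> E y -> m x = m y -> x = y.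
Hypothesis m_onto : forall y, F y -> exists x, E x /\ m x = y.
Hypothesis m_incr : strictly_increasing_on E m.
Hypothesis m_mp : measure_preserving E F m.

Definition image_span (p q : R) : R -> Prop := fun y =>
  F y /\ ((exists x, E x /\ p <= x <= q /\ m x <= y) /\
          (exists x, E x /\ p <= x <= q /\ y <= m x)).

Lemma image_span_meas p q : measurable (image_span p q).
Proof.
  apply inter_meas; auto. apply inter_meas.
  - apply upclosed_meas. intros y1 y2 H12 [x (?&?&?)]. exists x; repeat split; auto; lra.
  - apply downclosed_meas. intros y1 y2 H12 [x (?&?&?)]. exists x; repeat split; auto; lra.
Qed.

Lemma image_span_preimage p q x : E x -> image_span p q (m x) -> p <= x <= q.
Proof.
  intros Ex [_ [[x1 (E1 & I1 & L1)] [x2 (E2 & I2 & L2)]]]. split.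
  - destruct (Rle_lt_dec p x) as [h|h]; auto.
    assert (m x < m x1) by (apply m_incr; auto; lra). lra.
  - destruct (Rle_lt_dec x q) as [h|h]; auto.
    assert (m x2 < m x) by (apply m_incr; auto; lra). lra.
Qed.

Lemma lambda_image_span p q : p <= q -> ele (lambda (image_span p q)) (Fin (q - p)).
Proof.
  intro Hpq. destruct (m_mp (image_span p q)) as [_ <-].
  - apply image_span_meas.
  - intros y [? _]; auto.
  - apply lambda_interval; auto. intros x [Ex Hx]. apply image_span_preimage; auto.
Qed.

Lemma lambda_image_le S : (forall x, S x -> E x) -> ele (lambda (img m S)) (lambda S).
Proof.
  intro HS. apply (lambda_le_transfer _ _ image_span); [apply lambda_image_span|].
  intros a b Hcov y [x [Sx <-]]. destruct (Hcov x Sx) as [n Hn]. exists n.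
  split; [auto|]. split; exists x; repeat split; auto; lra.
Qed.

Lemma lambda_image_ge S : (forall x, S x -> E x) -> ele (lambda S) (lambda (img m S)).
Proof.
  intro HS.
  apply (lambda_le_transfer _ _ (fun p q x => E x /\ (F (m x) /\ (p <= m x /\ m x <= q)))).
  - intros p q Hpq. destruct (m_mp (fun y => F y /\ (p <= y /\ y <= q))) as [_ ->].
    + apply inter_meas; auto. apply interval_meas.
    + intros y [? _]; auto.
    + apply lambda_interval; auto. intros y [_ H]; lra.
  - intros a b Hcov x Sx. destruct (Hcov (m x)) as [n Hn]; [exists x; auto|].
    exists n. auto.
Qed.

Lemma lambda_image S : (forall x, S x -> E x) -> lambda (img m S) = lambda S.
Proof. intro HS. apply ele_antisym; [apply lambda_image_le | apply lambda_image_ge]; auto. Qed.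

Lemma image_meas B : measurable B -> (forall x, B x -> E x) -> measurable (img m B).
Proof.
  intros HB HBE. apply (measurable_within F); auto.
  { intros y [x [Bx <-]]. auto. }
  intro T. set (S := fun x => E x /\ T (m x)).
  assert (H1 : (fun y => T y /\ F y) = img m S).
  { apply set_ext; intro y; split.
    - intros [Ty Fy]. destruct (m_onto y Fy) as [x [Ex <-]]. exists x; split; auto; split; auto.
    - intros [x [[Ex Tx] <-]]; auto. }
  assert (H2 : (fun y => (T y /\ F y) /\ img m B y) = img m (fun x => S x /\ B x)).
  { apply set_ext; intro y; split.
    - intros [[Ty _] [x [Bx <-]]]. exists x. repeat split; auto.
    - intros [x [[[Ex Tx] Bx] <-]]. repeat split; auto. exists x; auto. }
  assert (H3 : (fun y => (T y /\ F y) /\ ~ img m B y) = img m (fun x => S x /\ ~ B x)).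
  { apply set_ext; intro y; split.
    - intros [[Ty Fy] Hn]. destruct (m_onto y Fy) as [x [Ex <-]]. exists x.
      repeat split; auto. intro Bx. apply Hn. exists x; auto.
    - intros [x [[[Ex Tx] Bx] <-]]. repeat split; auto.
      intros [x' [Bx' Hm]]. apply Bx. replace x with x'; auto. }
  assert (HS : forall P : R -> Prop, forall x, S x /\ P x -> E x)
    by (intros P x [[Ex _] _]; exact Ex).
  rewrite H1, H2, H3, !lambda_image by (apply HS || (intros x [Ex _]; exact Ex)).
  apply HB.
Qed.

End MonotoneBijection.

Section Inverse.
Variables (E F : R -> Prop) (m minv : R -> R).
Hypothesis m_maps : forall x, E x -> F (m x).
Hypothesis m_inj : forall x y, E x -> E y -> m x = m y -> x = y.
Hypothesis minv_inv : inverse_on E F m minv.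

Lemma inverse_increasing : strictly_increasing_on E m -> strictly_increasing_on F minv.
Proof.
  intros Hinc y1 y2 F1 F2 H12.
  destruct (minv_inv y1 F1) as [E1 M1], (minv_inv y2 F2) as [E2 M2].
  destruct (Rlt_le_dec (minv y1) (minv y2)) as [h|h]; auto.
  destruct (Rle_lt_or_eq_dec _ _ h) as [h'|h'].
  - assert (m (minv y2) < m (minv y1)) by (apply Hinc; auto). lra.
  - rewrite <- M1, <- M2, h' in H12. lra.
Qed.

Lemma inverse_preimage B : (forall x, B x -> E x) ->
  (fun y => F y /\ B (minv y)) = img m B.
Proof.
  intro HBE. apply set_ext. intro y. split.
  - intros [Fy By]. exists (minv y). split; auto. apply minv_inv; auto.
  - intros [x [Bx <-]]. assert (Fy : F (m x)) by auto.
    destruct (minv_inv _ Fy) as [E1 M1]. split; auto.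
    replace (minv (m x)) with x; auto.
Qed.

End Inverse.

Lemma inverse_exists (E F : R -> Prop) (m : R -> R) :
  (forall y, F y -> exists x, E x /\ m x = y) -> exists minv, inverse_on E F m minv.
Proof.
  intro Honto.
  exists (fun y => epsilon (inhabits 0) (fun x => E x /\ m x = y)).
  intros y Fy. apply epsilon_spec, Honto; auto.
Qed.

Theorem mainTheorem12 (E F : R -> Prop) (m : R -> R) :
  measurable E -> measurable F ->
  bijection_on E F m -> strictly_increasing_on E m ->
  measure_preserving E F m ->
  (forall minv : R -> R, inverse_on E F m minv ->
     strictly_increasing_on F minv /\ measure_preserving F E minv) /\
  MO E F m.
Proof.
  intros _ HF Hbij Hinc Hmp.
  pose proof Hbij as (Hmaps & Hinj & Honto).
  assert (Hinverse : forall minv, inverse_on E F m minv ->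
            strictly_increasing_on F minv /\ measure_preserving F E minv).
  { intros minv Hinv. split; [apply (inverse_increasing E F m); auto|].
    intros B HB HBE. rewrite (inverse_preimage E F m minv); auto.
    split; [apply (image_meas E F m) | apply (lambda_image E F m)]; auto. }
  split; [exact Hinverse|].
  destruct (inverse_exists E F m Honto) as [minv Hinv].
  split; [exact Hbij|]. split; [exact Hinc|]. split; [exact Hmp|].
  exists minv. split; [exact Hinv | apply Hinverse, Hinv].
Qed.
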